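(* Let $\mathbf a=(a_1,\dots,a_q)$ be a graceful permutation of length $q$ and let $p$ be an even integer with $2(q-1)/3<p<2q$. Then either $\mathbf a$ or its complement $\bar{\mathbf a}=(q-1-a_1,\dots,q-1-a_q)$ has two adjacent entries $x$ and $y$ (in either order) with $x<y<2(y-x)=p$.
   Context: A graceful permutation of length $n$ is an arrangement $(a_1,\dots,a_n)$ of the integers $\{0,1,\dots,n-1\}$ whose absolute differences $|a_{i+1}-a_i|$ ($1\le i\le n-1$) are exactly $\{1,\dots,n-1\}$. *)

From mathcomp Require Import all_boot.
Set Implicit Arguments. Unset Strict Implicit. Unset Printing Implicit Defensive.

Definition absdiff (m n : nat) : nat := (m - n) + (n - m).

Definition diffs (s : seq nat) : seq nat :=
  [seq absdiff xy.2 xy.1 | xy <- zip s (behead s)].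

Definition graceful (s : seq nat) : Prop :=
  perm_eq s (iota 0 (size s)) /\ perm_eq (diffs s) (iota 1 (size s).-1).

Definition complement (q : nat) (s : seq nat) : seq nat :=
  [seq (q - 1 - x) | x <- s].

Definition has_adj_pair (p : nat) (s : seq nat) : Prop :=
  exists i, i.+1 < size s /\
    exists x y,
      ((x = nth 0 s i /\ y = nth 0 s i.+1) \/ (y = nth 0 s i /\ x = nth 0 s i.+1))
      /\ x < y /\ y < 2 * (y - x) /\ 2 * (y - x) = p.

From mathcomp Require Import all_boot.
From mathcomp Require Import zify.

Set Implicit Arguments.
Unset Strict Implicit.
Unset Printing Implicit Defensive.

(* Write p = 2d.  Since 0 < d < q, the difference d occurs between two
   adjacent entries u, v of a, and the required pair exists in a exactly when
   min(u, v) < d.  Otherwise min(u, v) >= d, so max(u, v) >= 2d, and in the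
   complement the smaller of the two entries is q - 1 - max(u, v) <= q - 1 - 2d,
   which is < d because 3d > q - 1. *)

Lemma size_diffs (s : seq nat) : size (diffs s) = (size s).-1.
Proof. by rewrite size_map size_zip size_behead; lia. Qed.

Lemma nth_diffs (s : seq nat) i :
  i.+1 < size s -> nth 0 (diffs s) i = absdiff (nth 0 s i) (nth 0 s i.+1).
Proof.
move=> lti; have lt_zip : i < size (zip s (behead s)).
  by rewrite size_zip size_behead; lia.
by rewrite /diffs (nth_map (0, 0)) // nth_zip_cond lt_zip /= nth_behead /absdiff addnC.
Qed.

Lemma mem_diffs (s : seq nat) d :
  d \in diffs s ->
  exists2 i, i.+1 < size s & absdiff (nth 0 s i) (nth 0 s i.+1) = d.
Proof.
move=> dmem; exists (index d (diffs s)).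
  by move: dmem; rewrite -index_mem size_diffs; lia.
by rewrite -nth_diffs ?nth_index // -ltn_predRL -size_diffs index_mem.
Qed.

Lemma nth_graceful_lt (s : seq nat) i :
  graceful s -> i < size s -> nth 0 s i < size s.
Proof.
by case=> perm_s _ lti; move: (mem_nth 0 lti); rewrite (perm_mem perm_s) mem_iota.
Qed.

Lemma graceful_adjacent_absdiff (s : seq nat) d :
  graceful s -> 0 < d < size s ->
  exists2 i, i.+1 < size s & absdiff (nth 0 s i) (nth 0 s i.+1) = d.
Proof.
by case=> _ perm_diffs d_range; apply: mem_diffs; rewrite (perm_mem perm_diffs) mem_iota; lia.
Qed.

Lemma size_complement q (s : seq nat) : size (complement q s) = size s.
Proof. exact: size_map. Qed.

Lemma nth_complement q (s : seq nat) i :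
  i < size s -> nth 0 (complement q s) i = q - 1 - nth 0 s i.
Proof. exact: nth_map. Qed.

Lemma has_adj_pair_absdiff (s : seq nat) i d :
  i.+1 < size s -> absdiff (nth 0 s i) (nth 0 s i.+1) = d ->
  minn (nth 0 s i) (nth 0 s i.+1) < d -> has_adj_pair (2 * d) s.
Proof.
rewrite /absdiff => lti; set x := nth 0 s i; set y := nth 0 s i.+1 => dxy minxy.
exists i; split=> //; case: (leqP x y) => lexy.
- by exists x, y; split; [left | lia].
- by exists y, x; split; [right | lia].
Qed.

Theorem lemma5p8 (q p : nat) (a : seq nat) :
  size a = q -> graceful a ->
  ~~ odd p -> 2 * (q - 1) < 3 * p -> p < 2 * q ->
  has_adj_pair p a \/ has_adj_pair p (complement q a).
Proof.
move=> <- grace even_p.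
have [d ->] : exists d, p = 2 * d.
  by exists p./2; rewrite mul2n -[p in LHS]odd_double_half (negbTE even_p).
move=> p_lo p_hi; have d_range : 0 < d < size a by lia.
have [i lti dfi] := graceful_adjacent_absdiff grace d_range.
have lt_u := nth_graceful_lt grace (ltnW lti).
have lt_v := nth_graceful_lt grace lti.
case: (ltnP (minn (nth 0 a i) (nth 0 a i.+1)) d) => [min_lt | min_ge].
  by left; apply: (has_adj_pair_absdiff lti).
right; have u_def := nth_complement (size a) (ltnW lti).
have v_def := nth_complement (size a) lti.
apply: (has_adj_pair_absdiff (i := i)); rewrite ?size_complement ?u_def ?v_def //.
  by move: dfi; rewrite /absdiff; lia.
by move: dfi min_ge; rewrite /absdiff; lia.
Qed.
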